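(* Let $f\in\mathcal C$ be real-valued and let $P\Phi(x)=\lim_{k\to\infty}P_k\Phi(x)$. Then $P$ is a non-negative linear operator mapping $\mathcal C$ into $\mathcal C$, and it is continuous: $|P\Phi|_\infty\le e^{|f|_\infty}|\Phi|_\infty$ and there is a constant $c$ independent of $\Phi$ with $|P\Phi|_\beta\le c\|\Phi\|$ for all $\Phi\in\mathcal C$.
   Context: Let $I=[0,1)$ carry a metric $d_I$, fix $\theta\in(0,1)$, and let $\Omega=I^{\mathbb Z}$ with metric $d(x,y)=\sup_{k\in\mathbb Z}\theta^{|k|}d_I(x_k,y_k)$. Let $\tau:I\to I$ have full branches, so that $b=\#\tau^{-1}(t)$ is the same for every $t\in I$; let $p_\tau$ be a fixed point of $\tau$. Assume $\tau$ is expanding: there is $\eta\in(0,1)$ such that every inverse branch $\zeta$ of $\tau$ satisfies $d_I(\zeta(s),\zeta(t))\le\eta\,d_I(s,t)$. Let $\bar\tau:\Omega\to\Omega$, $(\bar\tau x)_i=\tau(x_i)$. For $k\ge0$ let $\Lambda_k=\{-k,\dots,k\}$ and let $\pi_k:\Omega\to\Omega$ be given by $(\pi_kx)_i=x_i$ for $|i|\le k$ and $(\pi_kx)_i=p_\tau$ for $|i|>k$. For $\Phi:\Omega\to\mathbb C$ put $\Phi_k=\Phi\circ\pi_k$. Fix $\beta\in(0,1]$; define $|\Phi|_\infty=\sup|\Phi|$, $|\Phi|_\beta=\sup_{k\in\mathbb N}\sup_{x\neq y}|\Phi_k(x)-\Phi_k(y)|/d(x,y)^\beta$, $\|\Phi\|=|\Phi|_\infty+|\Phi|_\beta$,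 and $\mathcal C=\{\Phi\in C(\Omega):\|\Phi\|<\infty\}$. An inverse branch of order $k$ is a choice $\zeta=(\zeta_j)_{|j|\le k}$ of inverse branches of $\tau$; for $x\in\Omega$, $\zeta_x$ is the point with $(\zeta_x)_j=\zeta_j(x_j)$ for $|j|\le k$ and $(\zeta_x)_j=x_j$ for $|j|>k$. There are $b_k=b^{2k+1}$ such branches; $\sum_{|\zeta|=k}$ denotes the sum over them. For a potential $f$, $P_k\Phi(x)=b_k^{-1}\sum_{|\zeta|=k}e^{f(\pi_k\zeta_x)}\Phi(\pi_k\zeta_x)$; the limit defining $P$ exists pointwise. *)

From Stdlib Require Import Reals Lra ZArith List ClassicalEpsilon.
Open Scope R_scope.

(** Complex numbers as pairs (real part, imaginary part). *)
Definition Cx : Type := (R * R)%type.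
Definition RtoC (r : R) : Cx := (r, 0).
Definition Cadd (z w : Cx) : Cx := (fst z + fst w, snd z + snd w).
Definition Csub (z w : Cx) : Cx := (fst z - fst w, snd z - snd w).
Definition Cmul (z w : Cx) : Cx :=
  (fst z * fst w - snd z * snd w, fst z * snd w + snd z * fst w).
Definition Cmod (z : Cx) : R := sqrt (fst z ^ 2 + snd z ^ 2).
Definition Csum (l : list Cx) : Cx := fold_right Cadd (0, 0) l.

(** Least upper bound of a set of reals (meaningful when it exists). *)
Definition supR (E : R -> Prop) : R := epsilon (inhabits 0) (fun l => is_lub E l).
Definition bounded_above (E : R -> Prop) : Prop := exists M, forall r, E r -> r <= M.

Definition powr (a e : R) : R := if Rle_dec a 0 then 0 else Rpower a e.

Definition Iset : Type := {t : R | 0 <= t < 1}.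
Definition Omega : Type := Z -> Iset.

Definition is_metric {X : Type} (d : X -> X -> R) : Prop :=
  (forall x y, 0 <= d x y) /\ (forall x y, d x y = 0 <-> x = y) /\
  (forall x y, d x y = d y x) /\ (forall x y z, d x z <= d x y + d y z).

Definition dOmega (dI : Iset -> Iset -> R) (theta : R) (x y : Omega) : R :=
  supR (fun r => exists k : Z, r = theta ^ (Z.abs_nat k) * dI (x k) (y k)).

Definition proj (p : Iset) (k : nat) (x : Omega) : Omega :=
  fun i => if (Z.abs i <=? Z.of_nat k)%Z then x i else p.

Definition supnorm (Phi : Omega -> Cx) : R := supR (fun r => exists x, r = Cmod (Phi x)).

Definition holder_quot_set (dI : Iset -> Iset -> R) (theta : R) (p : Iset) (beta : R)
  (Phi : Omega -> Cx) : R -> Prop :=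
  fun r => exists (k : nat) (x y : Omega), x <> y /\
    r = Cmod (Csub (Phi (proj p k x)) (Phi (proj p k y))) / powr (dOmega dI theta x y) beta.

Definition holder_semi dI theta p beta (Phi : Omega -> Cx) : R :=
  supR (holder_quot_set dI theta p beta Phi).

Definition normC dI theta p beta (Phi : Omega -> Cx) : R :=
  supnorm Phi + holder_semi dI theta p beta Phi.

Definition continuous_Omega (dI : Iset -> Iset -> R) (theta : R) (Phi : Omega -> Cx) : Prop :=
  forall x eps, 0 < eps -> exists delta, 0 < delta /\
    forall y, dOmega dI theta x y < delta -> Cmod (Csub (Phi y) (Phi x)) < eps.

Definition inC dI theta p beta (Phi : Omega -> Cx) : Prop :=
  continuous_Omega dI theta Phi /\
  bounded_above (fun r => exists x, r = Cmod (Phi x)) /\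
  bounded_above (holder_quot_set dI theta p beta Phi).

(** Inverse branches of order k: a choice c j in {0..b-1} of an inverse branch
    zeta (c j) for each j in Lambda_k. [choices b js] lists all such choices. *)
Fixpoint choices (b : nat) (js : list Z) : list (Z -> nat) :=
  match js with
  | nil => (fun _ => 0%nat) :: nil
  | j :: js' =>
      flat_map (fun c => map (fun i => fun z => if Z.eq_dec z j then i else c z) (seq 0 b))
               (choices b js')
  end.

Definition Lambda (k : nat) : list Z :=
  map (fun n => (Z.of_nat n - Z.of_nat k)%Z) (seq 0 (2 * k + 1)).

Definition apply_branch (zeta : nat -> Iset -> Iset) (k : nat) (c : Z -> nat) (x : Omega)
  : Omega :=
  fun j => if (Z.abs j <=? Z.of_nat k)%Z then zeta (c j) (x j) else x j.

Definition Pk (b : nat) (zeta : nat -> Iset -> Iset) (p : Iset) (f : Omega -> R)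
  (k : nat) (Phi : Omega -> Cx) (x : Omega) : Cx :=
  Cmul (RtoC (/ INR (b ^ (2 * k + 1))))
    (Csum (map (fun c => let y := proj p k (apply_branch zeta k c x) in
                         Cmul (RtoC (exp (f y))) (Phi y))
               (choices b (Lambda k)))).

Definition Ccv (u : nat -> Cx) (l : Cx) : Prop := Un_cv (fun n => Cmod (Csub (u n) l)) 0.

(* The whole argument rests on estimates for P_k that are UNIFORM in k and
   survive the pointwise limit.  Write g = e^f Phi and F = |f|_oo.

   - P_k Phi(x) is an average of b_k values g(pi_k zeta_x); each value has
     modulus <= e^F |Phi|_oo, so |P_k Phi(x)| <= e^F |Phi|_oo.
   - Since the inverse branches and pi_k do not increase d, and
     |g(pi_k A) - g(pi_k B)| <= e^F (|Phi|_beta + |f|_beta |Phi|_oo) d(A,B)^beta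
     (exp is e^F-Lipschitz below F), P_k Phi satisfies the GLOBAL Hoelder
     bound |P_k Phi(x) - P_k Phi(y)| <= K(Phi) d(x,y)^beta.
   - Pointwise limits preserve both bounds, linearity and the property of
     being real non-negative.  A global Hoelder bound gives continuity and a
     bound on |.|_beta, so P Phi lies in C with |P Phi|_beta <= K(Phi),
     and K(Phi) <= e^F (1 + |f|_beta) ||Phi||. *)

From Stdlib Require Import Reals ZArith List ClassicalEpsilon.
From Stdlib Require Import Lra Lia FunctionalExtensionality Classical.
From Coquelicot Require Complex.
Open Scope R_scope.

(** * Complex numbers: the modulus *)

Lemma Cx_eq (z w : Cx) : fst z = fst w -> snd z = snd w -> z = w.
Proof. destruct z, w; simpl; intros; subst; reflexivity. Qed.

Lemma Cmod_ge0 (z : Cx) : 0 <= Cmod z.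
Proof. exact (Complex.Cmod_ge_0 z). Qed.

Lemma Cmod_add_le (z w : Cx) : Cmod (Cadd z w) <= Cmod z + Cmod w.
Proof. exact (Complex.Cmod_triangle z w). Qed.

Lemma Cmod_mul (z w : Cx) : Cmod (Cmul z w) = Cmod z * Cmod w.
Proof. exact (Complex.Cmod_mult z w). Qed.

Lemma Cmod_RtoC (r : R) : Cmod (RtoC r) = Rabs r.
Proof. exact (Complex.Cmod_R r). Qed.

Lemma Cmod_RtoC_sub (r s : R) : Cmod (Csub (RtoC r) (RtoC s)) = Rabs (r - s).
Proof. rewrite <- Cmod_RtoC. unfold Cmod, Csub, RtoC; simpl. f_equal; ring. Qed.

Lemma Cmod_zero : Cmod (0, 0) = 0.
Proof. unfold Cmod; simpl. rewrite Rmult_0_l, Rplus_0_l. apply sqrt_0. Qed.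

Lemma Csub_self (z : Cx) : Cmod (Csub z z) = 0.
Proof.
  replace (Csub z z) with ((0, 0) : Cx) by (unfold Csub; apply Cx_eq; simpl; ring).
  apply Cmod_zero.
Qed.

Lemma Csub_eq0 (z w : Cx) : Cmod (Csub z w) = 0 -> z = w.
Proof.
  intro H. apply Complex.Cmod_eq_0 in H.
  destruct z, w; unfold Csub in H; simpl in H. injection H; intros. f_equal; lra.
Qed.

Lemma Csub_sym (z w : Cx) : Cmod (Csub z w) = Cmod (Csub w z).
Proof.
  replace (Csub z w) with (Cmul (RtoC (-1)) (Csub w z))
    by (unfold Csub, Cmul, RtoC; apply Cx_eq; simpl; ring).
  rewrite Cmod_mul, Cmod_RtoC, Rabs_left by lra. ring.
Qed.

Lemma Csub_triangle (z w v : Cx) : Cmod (Csub z v) <= Cmod (Csub z w) + Cmod (Csub w v).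
Proof.
  replace (Csub z v) with (Cadd (Csub z w) (Csub w v))
    by (unfold Csub, Cadd; apply Cx_eq; simpl; ring).
  apply Cmod_add_le.
Qed.

Lemma Cmod_le_sub (z w : Cx) : Cmod z <= Cmod (Csub z w) + Cmod w.
Proof.
  replace z with (Cadd (Csub z w) w) at 1 by (unfold Cadd, Csub; apply Cx_eq; simpl; ring).
  apply Cmod_add_le.
Qed.

Lemma Cmod_fst_le (z : Cx) : Rabs (fst z) <= Cmod z.
Proof.
  pose proof (Complex.Rmax_Cmod z). pose proof (Rmax_l (Rabs (fst z)) (Rabs (snd z))).
  change (Complex.Cmod z) with (Cmod z) in *. lra.
Qed.

Lemma Cmod_snd_le (z : Cx) : Rabs (snd z) <= Cmod z.
Proof.
  pose proof (Complex.Rmax_Cmod z). pose proof (Rmax_r (Rabs (fst z)) (Rabs (snd z))).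
  change (Complex.Cmod z) with (Cmod z) in *. lra.
Qed.

Lemma Cmod_lincomb_le (a c z w : Cx) :
  Cmod (Cadd (Cmul a z) (Cmul c w)) <= Cmod a * Cmod z + Cmod c * Cmod w.
Proof. eapply Rle_trans; [apply Cmod_add_le|]. rewrite !Cmod_mul. lra. Qed.

Lemma Csub_lincomb (a c z1 z2 w1 w2 : Cx) :
  Csub (Cadd (Cmul a z1) (Cmul c w1)) (Cadd (Cmul a z2) (Cmul c w2)) =
  Cadd (Cmul a (Csub z1 z2)) (Cmul c (Csub w1 w2)).
Proof. unfold Cadd, Csub, Cmul; apply Cx_eq; simpl; ring. Qed.

Lemma lincomb_uniform_continuity (a c : Cx) (eps : R) : 0 < eps ->
  exists delta, 0 < delta /\ forall z1 z2 w1 w2,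
    Cmod (Csub z1 z2) < delta -> Cmod (Csub w1 w2) < delta ->
    Cmod (Csub (Cadd (Cmul a z1) (Cmul c w1)) (Cadd (Cmul a z2) (Cmul c w2))) < eps.
Proof.
  intro He. pose proof (Cmod_ge0 a). pose proof (Cmod_ge0 c).
  set (delta := eps / (Cmod a + Cmod c + 1)).
  assert (Hd : delta * (Cmod a + Cmod c + 1) = eps) by (unfold delta; field; lra).
  assert (Hdpos : 0 < delta) by (unfold delta; apply Rdiv_lt_0_compat; lra).
  exists delta. split; [exact Hdpos|]. intros z1 z2 w1 w2 Hz Hw.
  rewrite Csub_lincomb. eapply Rle_lt_trans; [apply Cmod_lincomb_le|].
  assert (Cmod a * Cmod (Csub z1 z2) <= Cmod a * delta) by (apply Rmult_le_compat_l; lra).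
  assert (Cmod c * Cmod (Csub w1 w2) <= Cmod c * delta) by (apply Rmult_le_compat_l; lra).
  nra.
Qed.

Lemma Cmul_sub_distr (r z w : Cx) : Csub (Cmul r z) (Cmul r w) = Cmul r (Csub z w).
Proof. unfold Csub, Cmul; apply Cx_eq; simpl; ring. Qed.

Lemma supR_lub (E : R -> Prop) : bounded_above E -> (exists r, E r) -> is_lub E (supR E).
Proof.
  intros [M HM] Hne. unfold supR. apply epsilon_spec.
  destruct (completeness E) as [m Hm]; [exists M; exact HM | exact Hne | eauto].
Qed.

Lemma supR_ge (E : R -> Prop) (r : R) : bounded_above E -> E r -> r <= supR E.
Proof. intros Hb Hr. apply (supR_lub E Hb (ex_intro _ r Hr)). exact Hr. Qed.

Lemma supR_le (E : R -> Prop) (M : R) :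
  (exists r, E r) -> (forall r, E r -> r <= M) -> supR E <= M.
Proof. intros Hne HM. apply (supR_lub E (ex_intro _ M HM) Hne). exact HM. Qed.

Lemma powr_ge0 (a e : R) : 0 <= powr a e.
Proof. unfold powr. destruct (Rle_dec a 0); [lra|]. apply Rlt_le, exp_pos. Qed.

Lemma powr_pos (a e : R) : 0 < a -> 0 < powr a e.
Proof. intro. unfold powr. destruct (Rle_dec a 0); [lra|]. apply exp_pos. Qed.

Lemma powr_mono (a c e : R) : 0 <= e -> a <= c -> powr a e <= powr c e.
Proof.
  intros He Hac. unfold powr at 1. destruct (Rle_dec a 0); [apply powr_ge0|].
  unfold powr. destruct (Rle_dec c 0); [lra|]. apply Rle_Rpower_l; lra.
Qed.

Lemma powr_small (e beta : R) : 0 < e -> 0 < beta ->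
  exists delta, 0 < delta /\ forall t, t < delta -> powr t beta <= e.
Proof.
  intros He Hb. exists (Rpower e (/ beta)). split; [apply exp_pos|]. intros t Ht.
  unfold powr. destruct (Rle_dec t 0); [lra|].
  replace e with (Rpower (Rpower e (/ beta)) beta)
    by (rewrite Rpower_mult, Rinv_l, Rpower_1; lra).
  apply Rlt_le, Rlt_Rpower_l; lra.
Qed.

Lemma pow_le_1 (t : R) (n : nat) : 0 <= t <= 1 -> t ^ n <= 1.
Proof.
  intro H. induction n as [|n IH]; simpl; [lra|].
  rewrite <- (Rmult_1_l 1). apply Rmult_le_compat; try lra. apply pow_le; lra.
Qed.

Lemma exp_le (s t : R) : s <= t -> exp s <= exp t.
Proof. intros [H|H]; [apply Rlt_le, exp_increasing; exact H | subst; lra]. Qed.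

Lemma exp_lipschitz_below (F s t : R) : s <= F -> t <= F ->
  Rabs (exp s - exp t) <= exp F * Rabs (s - t).
Proof.
  (* for t <= s:  0 <= e^s - e^t = e^s (1 - e^(t-s)) <= e^s (s - t) *)
  assert (Hord : forall s t, t <= s -> s <= F -> Rabs (exp s - exp t) <= exp F * Rabs (s - t)).
  { clear s t. intros s t Hts HF.
    assert (Hsplit : exp t = exp s * exp (t - s)) by (rewrite <- exp_plus; f_equal; ring).
    pose proof (exp_ineq1_le (t - s)). pose proof (exp_pos s). pose proof (exp_le _ _ HF).
    assert (exp (t - s) <= 1) by (rewrite <- exp_0; apply exp_le; lra).
    rewrite (Rabs_right (s - t)), Rabs_right by nra.
    apply Rle_trans with (exp s * (s - t)); [nra|]. apply Rmult_le_compat_r; lra. }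
  intros Hs Ht. destruct (Rle_dec t s); [apply Hord; assumption|].
  rewrite Rabs_minus_sym, (Rabs_minus_sym s). apply Hord; lra.
Qed.

(** * The metric d on Omega *)

Section OmegaMetric.
Context {dI : Iset -> Iset -> R} {theta : R}.
Hypothesis HdI : is_metric dI.
Hypothesis HdIbd : exists M, forall s t, dI s t <= M.
Hypothesis Htheta : 0 < theta < 1.
Local Notation d := (dOmega dI theta).

Lemma dI_ge0 (s t : Iset) : 0 <= dI s t.
Proof. apply HdI. Qed.

(* The weighted coordinate distances are bounded, so d is their true supremum. *)
Lemma coord_dist_bounded (x y : Omega) :
  bounded_above (fun r => exists k : Z, r = theta ^ (Z.abs_nat k) * dI (x k) (y k)).
Proof.
  destruct HdIbd as [M HM]. exists M. intros r [k ->]. rewrite <- (Rmult_1_l M).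
  apply Rmult_le_compat; [apply pow_le; lra | apply dI_ge0 | apply pow_le_1; lra | apply HM].
Qed.

Lemma d_ge_coord (x y : Omega) (k : Z) : theta ^ (Z.abs_nat k) * dI (x k) (y k) <= d x y.
Proof. apply supR_ge; [apply coord_dist_bounded | eauto]. Qed.

Lemma d_le (x y : Omega) (M : R) :
  (forall k, theta ^ (Z.abs_nat k) * dI (x k) (y k) <= M) -> d x y <= M.
Proof.
  intro H. apply supR_le; [eexists; exists 0%Z; reflexivity|].
  intros r [k ->]. apply H.
Qed.

Lemma d_ge0 (x y : Omega) : 0 <= d x y.
Proof.
  eapply Rle_trans; [|apply (d_ge_coord x y 0%Z)].
  apply Rmult_le_pos; [apply pow_le; lra | apply dI_ge0].
Qed.

Lemma d_pos (x y : Omega) : x <> y -> 0 < d x y.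
Proof.
  intro Hne. assert (Hk : exists k, x k <> y k).
  { apply NNPP; intro H. apply Hne, functional_extensionality; intro k.
    apply NNPP; intro H'. apply H; eauto. }
  destruct Hk as [k Hk]. eapply Rlt_le_trans; [|apply (d_ge_coord x y k)].
  apply Rmult_lt_0_compat; [apply pow_lt; lra|].
  destruct (dI_ge0 (x k) (y k)) as [H|H]; [exact H|].
  exfalso; apply Hk, HdI; auto.
Qed.

Lemma d_proj (p : Iset) (m : nat) (x y : Omega) : d (proj p m x) (proj p m y) <= d x y.
Proof.
  apply d_le; intro k. unfold proj. destruct (Z.abs k <=? Z.of_nat m)%Z; [apply d_ge_coord|].
  destruct HdI as (_ & Hzero & _). replace (dI p p) with 0 by (symmetry; apply Hzero; auto).
  rewrite Rmult_0_r. apply d_ge0.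
Qed.

Lemma d_branch (zeta : nat -> Iset -> Iset) (b k : nat) (c : Z -> nat) (x y : Omega) :
  (forall i s t, (i < b)%nat -> dI (zeta i s) (zeta i t) <= dI s t) ->
  (forall j, (Z.abs j <= Z.of_nat k)%Z -> (c j < b)%nat) ->
  d (apply_branch zeta k c x) (apply_branch zeta k c y) <= d x y.
Proof.
  intros Hz Hc. apply d_le; intro j. unfold apply_branch.
  destruct (Z.abs j <=? Z.of_nat k)%Z eqn:E; [|apply d_ge_coord].
  eapply Rle_trans; [|apply (d_ge_coord x y j)].
  apply Rmult_le_compat_l; [apply pow_le; lra|].
  apply Hz, Hc, Z.leb_le, E.
Qed.

End OmegaMetric.

(* Omega has two distinct points, so the set of Hoelder quotients is non-empty. *)
Lemma Omega_two_points : exists x y : Omega, x <> y.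
Proof.
  assert (H0 : 0 <= 0 < 1) by lra. assert (H1 : 0 <= 1/2 < 1) by lra.
  exists (fun _ => exist _ 0 H0), (fun _ => exist _ (1/2) H1). intro H.
  apply (f_equal (fun g => proj1_sig (g 0%Z))) in H. simpl in H. lra.
Qed.

Lemma Ccv_eventually (u : nat -> Cx) (l : Cx) (eps : R) : Ccv u l -> 0 < eps ->
  exists N, forall n, (n >= N)%nat -> Cmod (Csub (u n) l) < eps.
Proof.
  intros H He. destruct (H eps He) as [N HN]. exists N. intros n Hn. specialize (HN n Hn).
  unfold R_dist in HN. rewrite Rminus_0_r, Rabs_right in HN; [exact HN|].
  apply Rle_ge, Cmod_ge0.
Qed.

Lemma Ccv_ext (u v : nat -> Cx) (l : Cx) : (forall k, u k = v k) -> Ccv u l -> Ccv v l.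
Proof.
  intros E Hu eps He. destruct (Hu eps He) as [N HN].
  exists N. intros n Hn. rewrite <- E. auto.
Qed.

Lemma Ccv_dist_le (u v : nat -> Cx) (l m : Cx) (B : R) : Ccv u l -> Ccv v m ->
  (forall k, Cmod (Csub (u k) (v k)) <= B) -> Cmod (Csub l m) <= B.
Proof.
  intros Hu Hv HB. apply Rnot_lt_le; intro Hlt.
  set (eps := (Cmod (Csub l m) - B) / 2).
  destruct (Ccv_eventually u l eps Hu) as [N1 H1]; [unfold eps; lra|].
  destruct (Ccv_eventually v m eps Hv) as [N2 H2]; [unfold eps; lra|].
  set (n := max N1 N2). specialize (H1 n ltac:(lia)). specialize (H2 n ltac:(lia)).
  pose proof (Csub_triangle l (u n) m). pose proof (Csub_triangle (u n) (v n) m).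
  pose proof (HB n). rewrite Csub_sym in H1. unfold eps in *. lra.
Qed.

Lemma Ccv_unique (u : nat -> Cx) (l m : Cx) : Ccv u l -> Ccv u m -> l = m.
Proof.
  intros H1 H2. apply Csub_eq0, Rle_antisym; [|apply Cmod_ge0].
  apply (Ccv_dist_le u u l m); auto. intro k. rewrite Csub_self. lra.
Qed.

Lemma Ccv_le (u : nat -> Cx) (l : Cx) (B : R) : Ccv u l ->
  (forall k, Cmod (u k) <= B) -> Cmod l <= B.
Proof.
  intros Hu HB. apply Rnot_lt_le; intro Hlt.
  destruct (Ccv_eventually u l ((Cmod l - B) / 2) Hu) as [N H1]; [lra|].
  specialize (H1 N ltac:(lia)). pose proof (Cmod_le_sub l (u N)).
  rewrite Csub_sym in H1. specialize (HB N). lra.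
Qed.

Lemma Ccv_lincomb (u v : nat -> Cx) (l m a c : Cx) : Ccv u l -> Ccv v m ->
  Ccv (fun k => Cadd (Cmul a (u k)) (Cmul c (v k))) (Cadd (Cmul a l) (Cmul c m)).
Proof.
  intros Hu Hv eps He.
  destruct (lincomb_uniform_continuity a c eps He) as [delta [Hd Hlin]].
  destruct (Ccv_eventually u l delta Hu Hd) as [N1 H1].
  destruct (Ccv_eventually v m delta Hv Hd) as [N2 H2].
  exists (max N1 N2). intros n Hn. unfold R_dist.
  rewrite Rminus_0_r, Rabs_right by (apply Rle_ge, Cmod_ge0).
  apply Hlin; [apply H1 | apply H2]; lia.
Qed.

Definition Cnonneg (z : Cx) : Prop := snd z = 0 /\ 0 <= fst z.

Lemma Cnonneg_scale (r : R) (z : Cx) : 0 <= r -> Cnonneg z -> Cnonneg (Cmul (RtoC r) z).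
Proof. intros Hr [Hi Hre]. unfold Cmul, RtoC; split; simpl; rewrite Hi; [ring | nra]. Qed.

Lemma Ccv_nonneg (u : nat -> Cx) (l : Cx) : Ccv u l -> (forall k, Cnonneg (u k)) -> Cnonneg l.
Proof.
  intros Hu Hnn. split.
  - apply NNPP; intro Hne. assert (Hpos : 0 < Rabs (snd l)) by (apply Rabs_pos_lt; auto).
    destruct (Ccv_eventually u l _ Hu Hpos) as [N H1]. specialize (H1 N ltac:(lia)).
    pose proof (Cmod_snd_le (Csub (u N) l)) as H2. simpl in H2.
    rewrite (proj1 (Hnn N)), Rminus_0_l, Rabs_Ropp in H2. lra.
  - apply Rnot_lt_le; intro Hlt.
    destruct (Ccv_eventually u l (- fst l) Hu) as [N H1]; [lra|]. specialize (H1 N ltac:(lia)).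
    pose proof (Cmod_fst_le (Csub (u N) l)) as H2. simpl in H2.
    pose proof (proj2 (Hnn N)). pose proof (Rle_abs (fst (u N) - fst l)). lra.
Qed.

Lemma Csum_map_sub {T} (L : list T) (g1 g2 : T -> Cx) :
  Csub (Csum (map g1 L)) (Csum (map g2 L)) = Csum (map (fun t => Csub (g1 t) (g2 t)) L).
Proof.
  induction L as [|t L IH]; simpl; [unfold Csub; apply Cx_eq; simpl; ring|].
  rewrite <- IH. unfold Csub, Cadd; apply Cx_eq; simpl; ring.
Qed.

Lemma Csum_map_lincomb {T} (L : list T) (g1 g2 : T -> Cx) (a c : Cx) :
  Csum (map (fun t => Cadd (Cmul a (g1 t)) (Cmul c (g2 t))) L) =
  Cadd (Cmul a (Csum (map g1 L))) (Cmul c (Csum (map g2 L))).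
Proof.
  induction L as [|t L IH]; simpl; [unfold Cadd, Cmul; apply Cx_eq; simpl; ring|].
  rewrite IH. unfold Cadd, Cmul; apply Cx_eq; simpl; ring.
Qed.

Lemma Csum_map_le {T} (L : list T) (g : T -> Cx) (B : R) :
  (forall t, In t L -> Cmod (g t) <= B) -> Cmod (Csum (map g L)) <= INR (length L) * B.
Proof.
  induction L as [|t L IH]; intro H; [simpl; rewrite Cmod_zero; lra|].
  change (Csum (map g (t :: L))) with (Cadd (g t) (Csum (map g L))).
  change (length (t :: L)) with (S (length L)). rewrite S_INR.
  eapply Rle_trans; [apply Cmod_add_le|].
  pose proof (H t (or_introl eq_refl)). pose proof (IH (fun s h => H s (or_intror h))). lra.
Qed.

Lemma Csum_map_nonneg {T} (L : list T) (g : T -> Cx) :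
  (forall t, In t L -> Cnonneg (g t)) -> Cnonneg (Csum (map g L)).
Proof.
  induction L as [|t L IH]; simpl; intro Hg; [split; simpl; lra|].
  destruct (Hg t (or_introl eq_refl)). destruct (IH (fun s h => Hg s (or_intror h))).
  split; simpl; lra.
Qed.

Lemma Cavg_le {T} (N : nat) (L : list T) (g : T -> Cx) (B : R) :
  length L = N -> (0 < N)%nat -> (forall t, In t L -> Cmod (g t) <= B) ->
  Cmod (Cmul (RtoC (/ INR N)) (Csum (map g L))) <= B.
Proof.
  intros HL HN H. pose proof (Csum_map_le L g B H) as Hsum. rewrite HL in Hsum.
  assert (HNpos : 0 < INR N) by (apply lt_0_INR; exact HN).
  rewrite Cmod_mul, Cmod_RtoC, Rabs_right by (apply Rle_ge, Rlt_le, Rinv_0_lt_compat, HNpos).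
  apply Rmult_le_reg_l with (INR N); [exact HNpos|].
  rewrite <- Rmult_assoc, Rinv_r by lra. lra.
Qed.

Lemma supnorm_le (Phi : Omega -> Cx) (M : R) : (forall x, Cmod (Phi x) <= M) -> supnorm Phi <= M.
Proof.
  intro H. destruct Omega_two_points as [x0 _].
  apply supR_le; [eexists; exists x0; reflexivity|]. intros r [x ->]. apply H.
Qed.

(** * The Hoelder class C *)

Definition holder_bound (dI : Iset -> Iset -> R) (theta beta K : R) (Phi : Omega -> Cx) : Prop :=
  forall x y, Cmod (Csub (Phi x) (Phi y)) <= K * powr (dOmega dI theta x y) beta.

(* The same bound, required only for the truncations Phi_k = Phi o pi_k:
   this is exactly the statement |Phi|_beta <= K. *)
Definition proj_holder_bound (dI : Iset -> Iset -> R) (theta : R) (p : Iset) (beta K : R)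
  (Phi : Omega -> Cx) : Prop :=
  forall k x y,
    Cmod (Csub (Phi (proj p k x)) (Phi (proj p k y))) <= K * powr (dOmega dI theta x y) beta.

Section HoelderClass.
Context {dI : Iset -> Iset -> R} {theta beta : R} {p : Iset}.
Hypothesis HdI : is_metric dI.
Hypothesis HdIbd : exists M, forall s t, dI s t <= M.
Hypothesis Htheta : 0 < theta < 1.
Hypothesis Hbeta : 0 < beta <= 1.
Local Notation d := (dOmega dI theta).
Local Notation inC' := (inC dI theta p beta).
Local Notation Hs := (holder_semi dI theta p beta).
Local Notation holder_bound' := (holder_bound dI theta beta).
Local Notation proj_holder_bound' := (proj_holder_bound dI theta p beta).

Lemma supnorm_ge (Phi : Omega -> Cx) (x : Omega) : inC' Phi -> Cmod (Phi x) <= supnorm Phi.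
Proof. intros (_ & Hb & _). apply supR_ge; eauto. Qed.

Lemma supnorm_ge0 (Phi : Omega -> Cx) : inC' Phi -> 0 <= supnorm Phi.
Proof. intro Hc. eapply Rle_trans; [apply Cmod_ge0 | apply (supnorm_ge Phi (fun _ => p) Hc)]. Qed.

Lemma quotient_le_iff (Phi : Omega -> Cx) (K : R) (k : nat) (x y : Omega) : x <> y ->
  Cmod (Csub (Phi (proj p k x)) (Phi (proj p k y))) / powr (d x y) beta <= K <->
  Cmod (Csub (Phi (proj p k x)) (Phi (proj p k y))) <= K * powr (d x y) beta.
Proof.
  intro Hne. assert (Hp : 0 < powr (d x y) beta) by (apply powr_pos, d_pos; assumption).
  split; intro H.
  - apply Rmult_le_reg_r with (/ powr (d x y) beta); [apply Rinv_0_lt_compat, Hp|].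
    rewrite Rmult_assoc, Rinv_r, Rmult_1_r by lra. exact H.
  - apply Rmult_le_reg_r with (powr (d x y) beta); [exact Hp|].
    unfold Rdiv. rewrite Rmult_assoc, Rinv_l, Rmult_1_r by lra. exact H.
Qed.

Lemma proj_holder_bounded (Phi : Omega -> Cx) (K : R) :
  proj_holder_bound' K Phi -> bounded_above (holder_quot_set dI theta p beta Phi).
Proof. intro HK. exists K. intros r (k & x & y & Hne & ->). apply quotient_le_iff; auto. Qed.

Lemma holder_semi_ge0 (Phi : Omega -> Cx) : inC' Phi -> 0 <= Hs Phi.
Proof.
  intros (_ & _ & Hb). destruct Omega_two_points as [x [y Hxy]].
  eapply Rle_trans;
    [|apply supR_ge; [exact Hb | exists 0%nat, x, y; split; [exact Hxy | reflexivity]]].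
  apply Rmult_le_pos; [apply Cmod_ge0 | apply Rlt_le, Rinv_0_lt_compat, powr_pos, d_pos; auto].
Qed.

Lemma holder_semi_spec (Phi : Omega -> Cx) : inC' Phi -> proj_holder_bound' (Hs Phi) Phi.
Proof.
  intros Hc k x y. destruct (classic (x = y)) as [<-|Hne].
  - rewrite Csub_self. apply Rmult_le_pos; [apply holder_semi_ge0, Hc | apply powr_ge0].
  - destruct Hc as (_ & _ & Hb). apply quotient_le_iff; [exact Hne|].
    apply supR_ge; [exact Hb | exists k, x, y; auto].
Qed.

Lemma holder_semi_le (Phi : Omega -> Cx) (K : R) : proj_holder_bound' K Phi -> Hs Phi <= K.
Proof.
  intro HK. apply supR_le.
  - destruct Omega_two_points as [x [y Hxy]].
    eexists; exists 0%nat, x, y; split; [exact Hxy | reflexivity].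
  - intros r (k & x & y & Hne & ->). apply quotient_le_iff; auto.
Qed.

(* Since pi_k does not increase d, a global bound implies the truncated one. *)
Lemma holder_bound_proj (Phi : Omega -> Cx) (K : R) : 0 <= K ->
  holder_bound' K Phi -> proj_holder_bound' K Phi.
Proof.
  intros HK HPhi k x y. eapply Rle_trans; [apply HPhi|].
  apply Rmult_le_compat_l; [exact HK|]. apply powr_mono; [lra | apply d_proj; assumption].
Qed.

Lemma holder_bound_continuous (Phi : Omega -> Cx) (K : R) : 0 <= K ->
  holder_bound' K Phi -> continuous_Omega dI theta Phi.
Proof.
  intros HK HPhi x eps He.
  set (e := eps / (K + 1)).
  assert (Hepos : 0 < e) by (unfold e; apply Rdiv_lt_0_compat; lra).
  assert (Heps : K * e + e = eps) by (unfold e; field; lra).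
  destruct (powr_small e beta Hepos (proj1 Hbeta)) as [delta [Hd Hsmall]].
  exists delta. split; [exact Hd|]. intros y Hy.
  rewrite Csub_sym. eapply Rle_lt_trans; [apply HPhi|].
  assert (K * powr (d x y) beta <= K * e) by (apply Rmult_le_compat_l; auto). lra.
Qed.

Lemma inC_of_holder_bound (Phi : Omega -> Cx) (M K : R) : 0 <= K ->
  (forall x, Cmod (Phi x) <= M) -> holder_bound' K Phi -> inC' Phi.
Proof.
  intros HK HM HPhi. split; [|split].
  - apply (holder_bound_continuous Phi K HK HPhi).
  - exists M. intros r [x ->]. apply HM.
  - apply (proj_holder_bounded Phi K), holder_bound_proj; assumption.
Qed.

Lemma holder_bound_limit (u : nat -> Omega -> Cx) (U : Omega -> Cx) (K : R) :
  (forall x, Ccv (fun k => u k x) (U x)) -> (forall k, holder_bound' K (u k)) -> holder_bound' K U.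
Proof.
  intros Hcv Hu x y. apply (Ccv_dist_le (fun k => u k x) (fun k => u k y)); auto.
  intro k. apply Hu.
Qed.

Lemma inC_lincomb (a c : Cx) (Phi Psi : Omega -> Cx) : inC' Phi -> inC' Psi ->
  inC' (fun y => Cadd (Cmul a (Phi y)) (Cmul c (Psi y))).
Proof.
  intros HPhi HPsi. pose proof (Cmod_ge0 a). pose proof (Cmod_ge0 c).
  split; [|split].
  - intros x eps He. destruct (lincomb_uniform_continuity a c eps He) as [e [He' Hlin]].
    destruct (proj1 HPhi x e He') as [d1 [Hd1 E1]]. destruct (proj1 HPsi x e He') as [d2 [Hd2 E2]].
    exists (Rmin d1 d2). split; [apply Rmin_glb_lt; assumption|]. intros y Hy.
    apply Hlin; [apply E1 | apply E2]; eapply Rlt_le_trans; eauto; [apply Rmin_l | apply Rmin_r].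
  - exists (Cmod a * supnorm Phi + Cmod c * supnorm Psi). intros r [x ->].
    eapply Rle_trans; [apply Cmod_lincomb_le|].
    pose proof (supnorm_ge Phi x HPhi). pose proof (supnorm_ge Psi x HPsi).
    apply Rplus_le_compat; apply Rmult_le_compat_l; assumption.
  - apply (proj_holder_bounded _ (Cmod a * Hs Phi + Cmod c * Hs Psi)). intros k x y.
    rewrite Csub_lincomb. eapply Rle_trans; [apply Cmod_lincomb_le|].
    pose proof (holder_semi_spec Phi HPhi k x y). pose proof (holder_semi_spec Psi HPsi k x y).
    rewrite Rmult_plus_distr_r, !Rmult_assoc.
    apply Rplus_le_compat; apply Rmult_le_compat_l; assumption.
Qed.

End HoelderClass.

(** * Inverse branches of order k *)

Lemma choices_range (b : nat) (js : list Z) (c : Z -> nat) :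
  In c (choices b js) -> forall j, In j js -> (c j < b)%nat.
Proof.
  revert c; induction js as [|j0 js IH]; simpl; intros c Hc j Hj; [contradiction|].
  apply in_flat_map in Hc as [c' [Hc' Hin]]. apply in_map_iff in Hin as [i [<- Hi]].
  apply in_seq in Hi. destruct (Z.eq_dec j j0); [lia|].
  destruct Hj as [Hj|Hj]; [congruence | apply IH; assumption].
Qed.

Lemma choices_length (b : nat) (js : list Z) : length (choices b js) = (b ^ length js)%nat.
Proof.
  induction js as [|j0 js IH]; simpl; [reflexivity|].
  rewrite <- IH. generalize (choices b js). intro l.
  induction l as [|c l IHl]; simpl; [lia|].
  rewrite List.length_app, List.length_map, List.length_seq, IHl. lia.
Qed.

Lemma Lambda_spec (k : nat) (j : Z) : (Z.abs j <= Z.of_nat k)%Z -> In j (Lambda k).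
Proof.
  intro H. unfold Lambda. apply in_map_iff. exists (Z.to_nat (j + Z.of_nat k)).
  split; [lia | apply in_seq; lia].
Qed.

Lemma Lambda_length (k : nat) : length (Lambda k) = (2 * k + 1)%nat.
Proof. unfold Lambda. rewrite List.length_map, List.length_seq. reflexivity. Qed.

Lemma branch_range (b k : nat) (c : Z -> nat) : In c (choices b (Lambda k)) ->
  forall j, (Z.abs j <= Z.of_nat k)%Z -> (c j < b)%nat.
Proof. intros H j Hj. eapply choices_range; [exact H | apply Lambda_spec, Hj]. Qed.

Lemma branch_count (b k : nat) : length (choices b (Lambda k)) = (b ^ (2 * k + 1))%nat.
Proof. rewrite choices_length, Lambda_length. reflexivity. Qed.

(** * The operators P_k *)

(* The constant K(Phi) = e^F (|Phi|_beta + |f|_beta |Phi|_oo) of the uniform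
   Hoelder bound for P_k Phi, where F = |f|_oo. *)
Definition transfer_constant (dI : Iset -> Iset -> R) (theta : R) (p : Iset) (beta : R)
  (f : Omega -> R) (Phi : Omega -> Cx) : R :=
  exp (supnorm (fun x => RtoC (f x))) *
  (holder_semi dI theta p beta Phi +
   holder_semi dI theta p beta (fun x => RtoC (f x)) * supnorm Phi).

Section TransferOperators.
Context {dI : Iset -> Iset -> R} {theta beta : R} {p : Iset}.
Context {b : nat} {zeta : nat -> Iset -> Iset} {f : Omega -> R}.
Hypothesis HdI : is_metric dI.
Hypothesis HdIbd : exists M, forall s t, dI s t <= M.
Hypothesis Htheta : 0 < theta < 1.
Hypothesis Hbeta : 0 < beta <= 1.
Hypothesis Hb : (0 < b)%nat.
Hypothesis Hnonexp : forall i s t, (i < b)%nat -> dI (zeta i s) (zeta i t) <= dI s t.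
Hypothesis Hf : inC dI theta p beta (fun x => RtoC (f x)).
Local Notation d := (dOmega dI theta).
Local Notation inC' := (inC dI theta p beta).
Local Notation Hs := (holder_semi dI theta p beta).
Local Notation holder_bound' := (holder_bound dI theta beta).
Local Notation proj_holder_bound' := (proj_holder_bound dI theta p beta).
Local Notation fC := (fun x => RtoC (f x)).
Local Notation F := (supnorm fC).
Local Notation Pk' := (Pk b zeta p f).
Local Notation transfer_constant' := (transfer_constant dI theta p beta f).

Lemma f_le_sup (y : Omega) : f y <= F.
Proof.
  eapply Rle_trans; [apply Rle_abs|]. rewrite <- Cmod_RtoC. apply (supnorm_ge fC y Hf).
Qed.

Lemma branch_count_pos (k : nat) : (0 < b ^ (2 * k + 1))%nat.
Proof. apply Nat.neq_0_lt_0, Nat.pow_nonzero; lia. Qed.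

Lemma transfer_constant_ge0 (Phi : Omega -> Cx) : inC' Phi -> 0 <= transfer_constant' Phi.
Proof.
  intro Hc. unfold transfer_constant. pose proof (exp_pos F).
  pose proof (holder_semi_ge0 HdI HdIbd Htheta Phi Hc).
  pose proof (holder_semi_ge0 HdI HdIbd Htheta fC Hf). pose proof (supnorm_ge0 Phi Hc).
  apply Rmult_le_pos; nra.
Qed.

Lemma transfer_constant_le_norm (Phi : Omega -> Cx) : inC' Phi ->
  transfer_constant' Phi <= exp F * (1 + Hs fC) * normC dI theta p beta Phi.
Proof.
  intro Hc. unfold transfer_constant, normC. pose proof (exp_pos F).
  pose proof (holder_semi_ge0 HdI HdIbd Htheta Phi Hc).
  pose proof (holder_semi_ge0 HdI HdIbd Htheta fC Hf). pose proof (supnorm_ge0 Phi Hc).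
  rewrite Rmult_assoc. apply Rmult_le_compat_l; nra.
Qed.

Lemma weighted_proj_holder (Phi : Omega -> Cx) : inC' Phi ->
  proj_holder_bound' (transfer_constant' Phi) (fun y => Cmul (RtoC (exp (f y))) (Phi y)).
Proof.
  intros Hc k A B. set (a := proj p k A). set (c := proj p k B). set (w := powr (d A B) beta).
  (* g(a) - g(c) = e^(f a) (Phi a - Phi c) + (e^(f a) - e^(f c)) Phi c *)
  replace (Csub (Cmul (RtoC (exp (f a))) (Phi a)) (Cmul (RtoC (exp (f c))) (Phi c)))
    with (Cadd (Cmul (RtoC (exp (f a))) (Csub (Phi a) (Phi c)))
               (Cmul (RtoC (exp (f a) - exp (f c))) (Phi c)))
    by (unfold Cadd, Csub, Cmul, RtoC; apply Cx_eq; simpl; ring).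
  eapply Rle_trans; [apply Cmod_lincomb_le|]. rewrite !Cmod_RtoC.
  rewrite (Rabs_right (exp (f a))) by (apply Rle_ge, Rlt_le, exp_pos).
  pose proof (exp_pos (f a)). pose proof (exp_le _ _ (f_le_sup a)).
  assert (0 <= w) by apply powr_ge0.
  assert (Hdiff : exp (f a) * Cmod (Csub (Phi a) (Phi c)) <= exp F * (Hs Phi * w)).
  { apply Rmult_le_compat; [lra | apply Cmod_ge0 | lra |].
    apply (holder_semi_spec HdI HdIbd Htheta Phi Hc). }
  assert (Hweight :
    Rabs (exp (f a) - exp (f c)) * Cmod (Phi c) <= exp F * (Hs fC * w) * supnorm Phi).
  { apply Rmult_le_compat; [apply Rabs_pos | apply Cmod_ge0 | | apply (supnorm_ge Phi c Hc)].
    eapply Rle_trans; [apply (exp_lipschitz_below F (f a) (f c) (f_le_sup a) (f_le_sup c))|].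
    apply Rmult_le_compat_l; [apply Rlt_le, exp_pos|].
    rewrite <- Cmod_RtoC_sub. apply (holder_semi_spec HdI HdIbd Htheta fC Hf). }
  unfold transfer_constant.
  apply Rle_trans with (exp F * (Hs Phi * w) + exp F * (Hs fC * w) * supnorm Phi); [lra|].
  apply Req_le; ring.
Qed.

Lemma Pk_holder (Phi : Omega -> Cx) (k : nat) : inC' Phi ->
  holder_bound' (transfer_constant' Phi) (Pk' k Phi).
Proof.
  intros Hc x y. unfold Pk. rewrite Cmul_sub_distr, Csum_map_sub.
  apply Cavg_le; [apply branch_count | apply branch_count_pos|].
  intros c Hcin. eapply Rle_trans; [apply (weighted_proj_holder Phi Hc)|].
  apply Rmult_le_compat_l; [apply transfer_constant_ge0, Hc|].
  apply powr_mono; [lra|]. apply (d_branch HdI HdIbd Htheta zeta b); [exact Hnonexp|].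
  apply branch_range, Hcin.
Qed.

Lemma Pk_sup (Phi : Omega -> Cx) (k : nat) (x : Omega) : inC' Phi ->
  Cmod (Pk' k Phi x) <= exp F * supnorm Phi.
Proof.
  intro Hc. unfold Pk. apply Cavg_le; [apply branch_count | apply branch_count_pos|].
  intros c _. cbv beta zeta.
  rewrite Cmod_mul, Cmod_RtoC, Rabs_right by (apply Rle_ge, Rlt_le, exp_pos).
  apply Rmult_le_compat;
    [apply Rlt_le, exp_pos | apply Cmod_ge0 | apply exp_le, f_le_sup | apply (supnorm_ge _ _ Hc)].
Qed.

Lemma Pk_lincomb (k : nat) (a c : Cx) (Phi Psi : Omega -> Cx) (x : Omega) :
  Pk' k (fun y => Cadd (Cmul a (Phi y)) (Cmul c (Psi y))) x =
  Cadd (Cmul a (Pk' k Phi x)) (Cmul c (Pk' k Psi x)).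
Proof.
  unfold Pk. cbv zeta.
  rewrite (map_ext _ (fun c0 =>
    let y := proj p k (apply_branch zeta k c0 x) in
    Cadd (Cmul a (Cmul (RtoC (exp (f y))) (Phi y))) (Cmul c (Cmul (RtoC (exp (f y))) (Psi y))))).
  - rewrite Csum_map_lincomb. unfold Cadd, Cmul; apply Cx_eq; simpl; ring.
  - intro c0. unfold Cadd, Cmul; apply Cx_eq; simpl; ring.
Qed.

Lemma Pk_nonneg (Phi : Omega -> Cx) (k : nat) (x : Omega) :
  (forall y, Cnonneg (Phi y)) -> Cnonneg (Pk' k Phi x).
Proof.
  intro Hnn. unfold Pk. apply Cnonneg_scale.
  - apply Rlt_le, Rinv_0_lt_compat, lt_0_INR, branch_count_pos.
  - apply Csum_map_nonneg. intros c _. apply Cnonneg_scale; [apply Rlt_le, exp_pos | apply Hnn].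
Qed.

End TransferOperators.

(** * The limit operator P *)

Section LimitOperator.
Context {dI : Iset -> Iset -> R} {theta beta : R} {p : Iset}.
Context {b : nat} {zeta : nat -> Iset -> Iset} {f : Omega -> R}.
Context {P : (Omega -> Cx) -> (Omega -> Cx)}.
Hypothesis HdI : is_metric dI.
Hypothesis HdIbd : exists M, forall s t, dI s t <= M.
Hypothesis Htheta : 0 < theta < 1.
Hypothesis Hbeta : 0 < beta <= 1.
Hypothesis Hb : (0 < b)%nat.
Hypothesis Hnonexp : forall i s t, (i < b)%nat -> dI (zeta i s) (zeta i t) <= dI s t.
Hypothesis Hf : inC dI theta p beta (fun x => RtoC (f x)).
Local Notation inC' := (inC dI theta p beta).
Local Notation Pk' := (Pk b zeta p f).
Local Notation transfer_constant' := (transfer_constant dI theta p beta f).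
Local Notation F := (supnorm (fun x => RtoC (f x))).
Hypothesis HP : forall Phi, inC' Phi -> forall x, Ccv (fun k => Pk' k Phi x) (P Phi x).

Lemma P_holder (Phi : Omega -> Cx) : inC' Phi ->
  holder_bound dI theta beta (transfer_constant' Phi) (P Phi).
Proof.
  intro Hc. apply (holder_bound_limit (fun k => Pk' k Phi)); [apply HP, Hc|].
  intro k. apply (Pk_holder HdI HdIbd Htheta Hbeta Hb Hnonexp Hf _ _ Hc).
Qed.

Lemma P_sup (Phi : Omega -> Cx) (x : Omega) : inC' Phi -> Cmod (P Phi x) <= exp F * supnorm Phi.
Proof. intro Hc. apply (Ccv_le _ _ _ (HP Phi Hc x)). intro k. apply (Pk_sup Hb Hf _ _ _ Hc). Qed.

Lemma P_supnorm (Phi : Omega -> Cx) : inC' Phi -> supnorm (P Phi) <= exp F * supnorm Phi.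
Proof. intro Hc. apply supnorm_le. intro x. apply P_sup, Hc. Qed.

Lemma P_maps_C (Phi : Omega -> Cx) : inC' Phi -> inC' (P Phi).
Proof.
  intro Hc.
  apply (inC_of_holder_bound HdI HdIbd Htheta Hbeta _ (exp F * supnorm Phi)
                             (transfer_constant' Phi)).
  - apply (transfer_constant_ge0 HdI HdIbd Htheta Hf _ Hc).
  - intro x. apply P_sup, Hc.
  - apply P_holder, Hc.
Qed.

Lemma P_linear (a c : Cx) (Phi Psi : Omega -> Cx) : inC' Phi -> inC' Psi -> forall x,
  P (fun y => Cadd (Cmul a (Phi y)) (Cmul c (Psi y))) x =
  Cadd (Cmul a (P Phi x)) (Cmul c (P Psi x)).
Proof.
  intros HPhi HPsi x. eapply Ccv_unique; [apply HP, (inC_lincomb HdI HdIbd Htheta); assumption|].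
  eapply Ccv_ext; [|apply (Ccv_lincomb _ _ _ _ a c (HP Phi HPhi x) (HP Psi HPsi x))].
  intro k. symmetry. apply Pk_lincomb.
Qed.

Lemma P_nonneg (Phi : Omega -> Cx) : inC' Phi ->
  (forall y, Cnonneg (Phi y)) -> forall x, Cnonneg (P Phi x).
Proof.
  intros Hc Hnn x. apply (Ccv_nonneg _ _ (HP Phi Hc x)).
  intro k. apply (Pk_nonneg Hb _ _ _ Hnn).
Qed.

Lemma P_holder_semi (Phi : Omega -> Cx) : inC' Phi ->
  holder_semi dI theta p beta (P Phi) <=
  exp F * (1 + holder_semi dI theta p beta (fun x => RtoC (f x))) * normC dI theta p beta Phi.
Proof.
  intro Hc. eapply Rle_trans; [|apply (transfer_constant_le_norm HdI HdIbd Htheta Hf _ Hc)].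
  apply (holder_semi_le HdI HdIbd Htheta), (holder_bound_proj HdI HdIbd Htheta Hbeta).
  - apply (transfer_constant_ge0 HdI HdIbd Htheta Hf _ Hc).
  - apply P_holder, Hc.
Qed.

End LimitOperator.

Theorem mainTheorem2
  (dI : Iset -> Iset -> R) (theta beta : R)
  (tau : Iset -> Iset) (b : nat) (zeta : nat -> Iset -> Iset) (p : Iset)
  (f : Omega -> R) (P : (Omega -> Cx) -> (Omega -> Cx))
  (HdI : is_metric dI)
  (HdIbd : exists M, forall s t, dI s t <= M)
  (Htheta : 0 < theta < 1)
  (Hbeta : 0 < beta <= 1)
  (Hbranch : forall i t, (i < b)%nat -> tau (zeta i t) = t)
  (Hbranch_all : forall t s, tau s = t -> exists i, (i < b)%nat /\ s = zeta i t)
  (Hbranch_inj : forall t i j, (i < b)%nat -> (j < b)%nat -> zeta i t = zeta j t -> i = j)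
  (Hfix : tau p = p)
  (Hexp : exists eta, 0 < eta < 1 /\
     forall i s t, (i < b)%nat -> dI (zeta i s) (zeta i t) <= eta * dI s t)
  (Hf : inC dI theta p beta (fun x => RtoC (f x)))
  (HP : forall Phi, inC dI theta p beta Phi ->
          forall x, Ccv (fun k => Pk b zeta p f k Phi x) (P Phi x)) :
  (forall Phi, inC dI theta p beta Phi -> inC dI theta p beta (P Phi)) /\
  (forall (a c : Cx) Phi Psi, inC dI theta p beta Phi -> inC dI theta p beta Psi ->
     forall x, P (fun y => Cadd (Cmul a (Phi y)) (Cmul c (Psi y))) x
               = Cadd (Cmul a (P Phi x)) (Cmul c (P Psi x))) /\
  (forall Phi, inC dI theta p beta Phi ->
     (forall x, snd (Phi x) = 0 /\ 0 <= fst (Phi x)) ->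
     forall x, snd (P Phi x) = 0 /\ 0 <= fst (P Phi x)) /\
  (forall Phi, inC dI theta p beta Phi ->
     supnorm (P Phi) <= exp (supnorm (fun x => RtoC (f x))) * supnorm Phi) /\
  (exists c : R, forall Phi, inC dI theta p beta Phi ->
     holder_semi dI theta p beta (P Phi) <= c * normC dI theta p beta Phi).
Proof.
  (* the fixed point p has a preimage, so there is at least one branch *)
  assert (Hb : (0 < b)%nat).
  { destruct (Hbranch_all p p Hfix) as [i [Hi _]]. lia. }
  assert (Hnonexp : forall i s t, (i < b)%nat -> dI (zeta i s) (zeta i t) <= dI s t).
  { destruct Hexp as [eta [Heta Hcontr]]. intros i s t Hi.
    pose proof (Hcontr i s t Hi). pose proof (dI_ge0 HdI s t). nra. }
  split; [|split; [|split; [|split]]].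
  - exact (P_maps_C HdI HdIbd Htheta Hbeta Hb Hnonexp Hf HP).
  - exact (P_linear HdI HdIbd Htheta HP).
  - exact (P_nonneg Hb HP).
  - exact (P_supnorm Hb Hf HP).
  - exists (exp (supnorm (fun x => RtoC (f x))) *
            (1 + holder_semi dI theta p beta (fun x => RtoC (f x)))).
    exact (P_holder_semi HdI HdIbd Htheta Hbeta Hb Hnonexp Hf HP).
Qed.
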